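(* Let $L>0$, $C\subset\mathbb{R}^n$ a nonempty closed convex set and $(f,h)\in\mathcal{B}_L(C)$. Let $\{x_k\}_{k\ge0}$ be generated by NoLips with constant step size $\lambda\in(0,1/L]$ from $x_0\in\operatorname{int}\operatorname{dom}h$. Then for every $k\ge2$, \[ \min_{1\le i\le k}D_h(x_{i-1},x_i)\le\frac{2D_h(x_*,x_0)}{k(k-1)}, \] where $x_*\in\operatorname{argmin}_C f\cap\operatorname{dom}h$.
   Context: $h$ is Legendre with zone $C$ if it is closed convex proper, $\overline{\operatorname{dom}h}=C$, continuously differentiable and strictly convex on $\operatorname{int}\operatorname{dom}h\ne\emptyset$, and $\|\nabla h(x_k)\|\to\infty$ for every sequence in $\operatorname{int}\operatorname{dom}h$ converging to a boundary point of $\operatorname{dom}h$. $D_h(x,y)=h(x)-h(y)-\langle\nabla h(y),x-y\rangle$. $(f,h)\in\mathcal{B}_L(C)$ means: $h$ is Legendre with zone $C$; $f:\mathbb{R}^n\to\mathbb{R}\cup\{+\infty\}$ is closed convex proper with $\operatorname{dom}h\subset\operatorname{dom}f$, continuously differentiable on $\operatorname{int}\operatorname{dom}h$; for every $\lambda>0$, $x\in\operatorname{int}\operatorname{dom}h$, $p\in\mathbb{R}^n$ the problem $\min_u\langle p,u-x\rangle+\frac1\lambda D_h(u,x)$ has a unique minimizer lying in $\operatorname{int}\operatorname{dom}h$; $\inf_C f>-\infty$; some minimizer of $f$ on $C$ lies in $\operatorname{dom}h$; and $Lh-f$ is convex on $C$. NoLips iterates $x_{k+1}=\operatorname{argmin}_{u\in\mathbb{R}^n}\langle\nabla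 f(x_k),u-x_k\rangle+\frac1\lambda D_h(u,x_k)$. *)

From HB Require Import structures.
From mathcomp Require Import all_boot all_order all_algebra.
From mathcomp Require Import all_classical all_reals all_analysis.
Set Implicit Arguments. Unset Strict Implicit. Unset Printing Implicit Defensive.
Import Order.TTheory GRing.Theory Num.Theory.
Import numFieldNormedType.Exports.
Local Open Scope classical_set_scope.
Local Open Scope ring_scope.

Section Defs.
Context {R : realType} {n : nat}.
Notation V := 'rV[R]_n.

Definition ip (u v : V) : R := \sum_(i < n) u 0 i * v 0 i.

Definition dom (f : V -> \bar R) : set V := [set x | (f x < +oo)%E].

Definition proper_fun (f : V -> \bar R) : Prop :=
  (forall x, (-oo < f x)%E) /\ (exists x, (f x < +oo)%E).

Definition convex_efun (f : V -> \bar R) : Prop :=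
  forall (x y : V) (t : R), 0 <= t <= 1 ->
    (f ((1 - t) *: x + t *: y)%R <= (1 - t)%:E * f x + t%:E * f y)%E.

(* closed = lower semicontinuous = all sublevel sets closed *)
Definition closed_fun (f : V -> \bar R) : Prop :=
  forall a : R, closed [set x | (f x <= a%:E)%E].

Definition convex_set_ (C : set V) : Prop :=
  forall x y (t : R), C x -> C y -> 0 <= t <= 1 -> C ((1 - t) *: x + t *: y).

Definition grad (f : V -> \bar R) (x : V) : V :=
  \row_(i < n) ('d (fine \o f) x) (delta_mx 0 i).

Definition cont_diff_on (f : V -> \bar R) (U : set V) : Prop :=
  (forall x, U x -> differentiable (fine \o f) x) /\
  (forall x, U x -> {for x, continuous (grad f)}).

Definition strictly_convex_on (f : V -> \bar R) (U : set V) : Prop :=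
  forall x y (t : R), U x -> U y -> x != y -> 0 < t < 1 ->
    (f ((1 - t) *: x + t *: y)%R < (1 - t)%:E * f x + t%:E * f y)%E.

Definition Legendre (h : V -> \bar R) (C : set V) : Prop :=
  closed_fun h /\ convex_efun h /\ proper_fun h /\
      closure (dom h) = C /\
      (interior (dom h) !=set0) /\
      cont_diff_on h (interior (dom h)) /\
      strictly_convex_on h (interior (dom h)) /\
      forall (u : nat -> V) (z : V),
        (forall k, interior (dom h) (u k)) ->
        u @ \oo --> z ->
        (closure (dom h) `\` interior (dom h)) z ->
        (fun k => `|grad h (u k)|) @ \oo --> +oo.

Definition Dh (h : V -> \bar R) (x y : V) : \bar R :=
  (h x - h y - (ip (grad h y) (x - y))%:E)%E.

Definition nolips_obj (h : V -> \bar R) (lam : R) (p x u : V) : \bar R :=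
  ((ip p (u - x))%:E + (lam^-1)%:E * Dh h u x)%E.

Definition is_minimizer (F : V -> \bar R) (u : V) : Prop :=
  forall v, (F u <= F v)%E.

Definition B_L (L : R) (C : set V) (f h : V -> \bar R) : Prop :=
  Legendre h C /\
      (closed_fun f /\ convex_efun f /\ proper_fun f) /\
      dom h `<=` dom f /\
      cont_diff_on f (interior (dom h)) /\
      (forall (lam : R) (x p : V), 0 < lam -> interior (dom h) x ->
         exists u, [/\ interior (dom h) u,
                       is_minimizer (nolips_obj h lam p x) u &
                       forall v, is_minimizer (nolips_obj h lam p x) v -> v = u]) /\
      (exists m : R, forall x, C x -> (m%:E <= f x)%E) /\
      (exists xs, [/\ C xs, dom h xs & forall y, C y -> (f xs <= f y)%E]) /\
      (forall x y (t : R), C x -> C y -> dom h x -> dom h y -> 0 <= t <= 1 ->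
         let g := fun z => L * fine (h z) - fine (f z) in
         g ((1 - t) *: x + t *: y) <= (1 - t) * g x + t * g y).

End Defs.

(* The NoLips step is characterised by its first-order condition
   grad h (x_(k+1)) = grad h (x_k) - lam grad f (x_k).  Together with the three-point identity
   for Bregman distances, the descent lemma f u <= f v + <grad f v, u - v> + L D_h(u, v)
   (convexity of L h - f) and lam L <= 1, it yields the sufficient decrease
   D_h(x_(k-1), x_k) <= lam (f x_(k-1) - f x_k) and, by convexity of f,
   lam (f x_k - f x_* ) <= D_h(x_*, x_(k-1)) - D_h(x_*, x_k).  Weighting the first inequality
   by k - 1 and telescoping both gives sum_(i <= k) (i - 1) D_h(x_(i-1), x_i) <= D_h(x_*, x_0),
   while sum_(i <= k) (i - 1) = k (k - 1) / 2. *)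

From HB Require Import structures.
From mathcomp Require Import all_boot all_order all_algebra.
From mathcomp Require Import all_classical all_reals all_analysis.
From mathcomp Require Import ring lra.
Import Order.TTheory GRing.Theory Num.Theory.
Import numFieldNormedType.Exports.
Local Open Scope classical_set_scope.
Local Open Scope ring_scope.

Section DirectionalDifferential.
Local Set Implicit Arguments.
Context {R : realType} {V : normedModType R}.

Lemma diff_quotient_cvg (F : V -> R) (x w : V) : differentiable F x ->
  (fun t : R => t^-1 * (F (t *: w + x) - F x)) @ 0^'+ --> 'd F x w.
Proof.
move=> dF; rewrite -deriveE //; apply: cvg_dnbhs_at_right.
have /cvg_ex[l Hl] := @diff_derivable _ _ _ _ _ w dF.
by rewrite /derive (cvg_lim _ Hl).
Qed.

Lemma diff_le_of_near (F : V -> R) (x w : V) (c : R) : differentiable F x ->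
  (\forall t \near 0^'+, F (t *: w + x) - F x <= t * c) -> 'd F x w <= c.
Proof.
move=> dF Fle; apply: (cvgr_to_le (diff_quotient_cvg w dF) _).
near=> t; have t0 : 0 < t by near: t; exact: nbhs_right_gt.
by rewrite mulrC ler_pdivrMr // mulrC; near: t.
Unshelve. all: by end_near. Qed.

Lemma diff_ge_of_near (F : V -> R) (x w : V) (c : R) : differentiable F x ->
  (\forall t \near 0^'+, t * c <= F (t *: w + x) - F x) -> c <= 'd F x w.
Proof.
move=> dF Fge; apply: (cvgr_to_ge (diff_quotient_cvg w dF) _).
near=> t; have t0 : 0 < t by near: t; exact: nbhs_right_gt.
by rewrite mulrC ler_pdivlMr // mulrC; near: t.
Unshelve. all: by end_near. Qed.

Lemma nbhs_right_ray {A : set V} {x : V} (w : V) : nbhs x A ->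
  \forall t \near 0^'+, A (t *: w + x).
Proof.
move=> Ax; have : (fun t : R => t *: w + x) @ 0^'+ --> x.
  apply: cvg_at_right_filter.
  rewrite -[X in _ --> X]add0r -(scale0r w).
  by apply: cvgD; [apply: cvgZr_tmp; exact: cvg_id | exact: cvg_cst].
exact.
Qed.

Lemma convex_diff_le {G : V -> R} {x y : V} : differentiable G x ->
  (forall t, 0 <= t <= 1 -> G ((1 - t) *: x + t *: y) <= (1 - t) * G x + t * G y) ->
  'd G x (y - x) <= G y - G x.
Proof.
move=> dG cvx; apply: diff_le_of_near => //.
near=> t; have t0 : 0 < t by near: t; exact: nbhs_right_gt.
have t1 : t < 1 by near: t; exact: nbhs_right_lt.
have t01 : 0 <= t <= 1 by rewrite !ltW.
have := cvx t t01.
have -> : (1 - t) *: x + t *: y = t *: (y - x) + x.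
  by rewrite scalerBl scale1r scalerBr addrAC [RHS]addrC addrA.
lra.
Unshelve. all: by end_near. Qed.

End DirectionalDifferential.

Section Bregman.
Local Set Implicit Arguments.
Context {R : realType} {V : normedModType R}.
Implicit Types (H F : V -> R) (a b z : V).

Definition bregman H a b : R := H a - H b - 'd H b (a - b).

Lemma bregmanxx H a : bregman H a a = 0.
Proof. by rewrite /bregman !subrr linear0 subr0. Qed.

Lemma bregman_three_point H z a b :
  bregman H z b - bregman H z a = bregman H a b + ('d H a (z - a) - 'd H b (z - a)).
Proof.
by rewrite /bregman -[z - b](subrKA a) linearD /=; ring.
Qed.

Lemma bregman_descent {H F} {L : R} {a b} :
  differentiable H b -> differentiable F b ->
  (forall t, 0 <= t <= 1 -> (L *: H - F) ((1 - t) *: b + t *: a) <=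
                              (1 - t) * (L *: H - F) b + t * (L *: H - F) a) ->
  F a - F b - 'd F b (a - b) <= L * bregman H a b.
Proof.
move=> dH dF cvx; have iH := differentiableP dH; have iF := differentiableP dF.
have := convex_diff_le (differentiableB (differentiableZ L dH) dF) cvx.
rewrite diff_val /bregman !fctE /= -![L *: _]/(L * _).
move: ('d H b _) ('d F b _) (H a) (H b) (F a) (F b) => p q Ha Hb Fa Fb.
(* With [cvx] in the context [lra] is very slow. *)
by clear cvx; lra.
Qed.

Definition bregman_prox_obj (l : V -> R) (lam : R) H x v : R :=
  l (v - x) + lam^-1 * bregman H v x.

Lemma bregman_prox_diff_ge {H} {l : {linear V -> R}} {lam : R} {x u} w :
  0 < lam -> differentiable H u ->
  (\forall v \near u, bregman_prox_obj l lam H x u <= bregman_prox_obj l lam H x v) ->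
  'd H x w - lam * l w <= 'd H u w.
Proof.
move=> lam0 dH umin; apply: diff_ge_of_near => //.
apply: filterS2 (nbhs_right_ray w umin) (nbhs_right_gt 0) => t /= + t0.
have shift (g : {linear V -> R}) : g (t *: w + u - x) = t * g w + g (u - x).
  by rewrite -addrA linearD linearZ.
rewrite /bregman_prox_obj /bregman !shift.
move: (l w) ('d H x w) (l (u - x)) ('d H x (u - x)) => p q r s.
move: (H u) (H x) (H (t *: w + u)) => Hu Hx Ht le.
have : 0 <= lam * (t * p + lam^-1 * (Ht - Hu - t * q)).
  by rewrite mulr_ge0 ?(ltW lam0) //; lra.
rewrite mulrDr !mulrA mulfV ?gt_eqF // mul1r.
lra.
Qed.

Lemma bregman_prox_diff {H} {l : {linear V -> R}} {lam : R} {x u} w :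
  0 < lam -> differentiable H u ->
  (\forall v \near u, bregman_prox_obj l lam H x u <= bregman_prox_obj l lam H x v) ->
  'd H u w = 'd H x w - lam * l w.
Proof.
move=> lam0 dH umin; have ge v := bregman_prox_diff_ge v lam0 dH umin.
move: (ge w) (ge (- w)); rewrite !linearN.
move: ('d H u w) ('d H x w) (l w) => p q r le1 le2.
by apply/eqP; rewrite eq_le; apply/andP; split; lra.
Qed.

(* [a] is the NoLips successor of [b]: [step] is its first-order optimality condition and
   [smad] the descent lemma for [F] relative to [H]. *)
Section NoLipsStep.
Context {H F : V -> R} {lam L : R} {a b : V}.
Hypothesis lam_gt0 : 0 < lam.
Hypothesis lamL_le1 : lam * L <= 1.
Hypothesis step : forall w, 'd H a w = 'd H b w - lam * 'd F b w.
Hypothesis smad : F a - F b - 'd F b (a - b) <= L * bregman H a b.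
Hypothesis bregman_next_ge0 : 0 <= bregman H a b.

Let lamL_bregman : lam * (L * bregman H a b) <= bregman H a b.
Proof. by rewrite mulrA -[leRHS]mul1r ler_wpM2r. Qed.

Lemma nolips_sufficient_decrease : bregman H b a <= lam * (F b - F a).
Proof.
have := bregman_three_point H b a b; rewrite bregmanxx sub0r step.
have := ler_wpM2l (ltW lam_gt0) smad.
rewrite -[b - a]opprB !linearN /=.
move: bregman_next_ge0 lamL_bregman.
by move: (bregman H a b) ('d H b (a - b)) ('d F b (a - b)) => p q r; lra.
Qed.

Lemma nolips_gap_decrease z : 'd F b (z - b) <= F z - F b ->
  lam * (F a - F z) <= bregman H z b - bregman H z a.
Proof.
move=> fcvx; rewrite bregman_three_point step.
have := ler_wpM2l (ltW lam_gt0) smad.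
have := ler_wpM2l (ltW lam_gt0) fcvx.
rewrite -[z - b](subrKA a) linearD /=.
move: lamL_bregman.
move: (bregman H a b) ('d H b (z - a)) ('d F b (z - a)) ('d F b (a - b)) => p q r u.
lra.
Qed.

End NoLipsStep.
End Bregman.

Section ExtendedValued.
Local Set Implicit Arguments.
Context {R : realType} {n : nat}.
Notation V := 'rV[R]_n.
Implicit Types (f h : V -> \bar R) (x y : V).

Lemma ip_grad f x w : ip (grad f x) w = 'd (fine \o f) x w.
Proof.
rewrite [in RHS](row_sum_delta w) linear_sum /ip.
by apply: eq_bigr => i _; rewrite linearZ /= mxE mulrC.
Qed.

Lemma dom_fin_num f x : (forall z, (-oo < f z)%E) -> dom f x -> f x \is a fin_num.
Proof. by move=> /(_ x); rewrite /dom /=; case: (f x). Qed.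

Lemma Dh_bregman h x y : (forall z, (-oo < h z)%E) -> dom h x -> dom h y ->
  Dh h x y = (bregman (fine \o h) x y)%:E.
Proof.
move=> hpr dx dy; rewrite /Dh /bregman ip_grad /=.
rewrite -(fineK (dom_fin_num hpr dx)) -(fineK (dom_fin_num hpr dy)).
by rewrite /= -!EFinB.
Qed.

Lemma convex_efun_diff_le f x y : convex_efun f -> (forall z, (-oo < f z)%E) ->
  differentiable (fine \o f) x -> dom f x -> dom f y ->
  'd (fine \o f) x (y - x) <= fine (f y) - fine (f x).
Proof.
move=> cvx fpr df dx dy; apply: convex_diff_le => // t t01.
have := cvx x y t t01.
rewrite -(fineK (dom_fin_num fpr dx)) -(fineK (dom_fin_num fpr dy)) -!EFinM -EFinD /=.
by case: (f _) (fpr ((1 - t) *: x + t *: y)).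
Qed.

Lemma bregman_ge0 h x y : convex_efun h -> (forall z, (-oo < h z)%E) ->
  differentiable (fine \o h) y -> dom h x -> dom h y ->
  0 <= bregman (fine \o h) x y.
Proof. by move=> cvx hpr dh dx dy; rewrite subr_ge0 convex_efun_diff_le. Qed.

Lemma nolips_minimizer_diff f h (lam : R) x u w : 0 < lam ->
  (forall z, (-oo < h z)%E) -> dom h x ->
  differentiable (fine \o h) u -> nbhs u (dom h) ->
  is_minimizer (nolips_obj h lam (grad f x) x) u ->
  'd (fine \o h) u w = 'd (fine \o h) x w - lam * 'd (fine \o f) x w.
Proof.
move=> lam0 hpr dx dh Nu umin; apply: bregman_prox_diff lam0 dh _.
have objE v : dom h v -> nolips_obj h lam (grad f x) x v =
    (bregman_prox_obj ('d (fine \o f) x) lam (fine \o h) x v)%:E.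
  by move=> dv; rewrite /nolips_obj Dh_bregman // ip_grad -EFinM -EFinD.
have du : dom h u := nbhs_singleton Nu.
near=> v; have dv : dom h v by near: v.
by have := umin v; rewrite !objE // lee_fin.
Unshelve. all: by end_near. Qed.

Lemma nolips_iterate_interior {f h} {lam : R} {x : nat -> V} :
  (forall (lam : R) x p, 0 < lam -> interior (dom h) x ->
     exists u, [/\ interior (dom h) u, is_minimizer (nolips_obj h lam p x) u &
                   forall v, is_minimizer (nolips_obj h lam p x) v -> v = u]) ->
  0 < lam -> interior (dom h) (x 0%N) ->
  (forall k, is_minimizer (nolips_obj h lam (grad f (x k)) (x k)) (x k.+1)) ->
  forall m, interior (dom h) (x m).
Proof.
move=> argmin_uniq lam0 x0I xstep; elim=> [|m IH]; first exact: x0I.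
have [u [uI _ uniq_u]] := argmin_uniq lam (x m) (grad f (x m)) lam0 IH.
by rewrite (uniq_u _ (xstep m)).
Qed.

End ExtendedValued.

Section DescentRate.
Local Set Implicit Arguments.
Context {R : realType}.

Lemma triangular_sumr k : \sum_(i < k) (i%:R : R) = k%:R * (k%:R - 1) / 2.
Proof.
elim: k => [|k IH]; first by rewrite big_ord0 !mul0r.
by rewrite big_ord_recr /= IH -natr1; field.
Qed.

Lemma bigmin_le_weighted_sum (d : nat -> R) (c : R) k : (2 <= k)%N ->
  \sum_(i < k) i%:R * d i.+1 <= c ->
  (\big[mine/+oo]_(1 <= i < k.+1) (d i)%:E <= (2 / (k%:R * (k%:R - 1)) * c)%:E)%E.
Proof.
move=> k2 sum_le; have k_gt0 : (0 < k)%N by rewrite (leq_trans _ k2).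
have min_le i : (i < k)%N -> (\big[mine/+oo]_(1 <= j < k.+1) (d j)%:E <= (d i.+1)%:E)%E.
  by move=> ik; apply: ge_bigmin_seq; rewrite // mem_index_iota.
case: (\big[mine/+oo]_(1 <= j < k.+1) (d j)%:E)%E min_le => [m | | ] min_le; last 2 first.
- by have := min_le 0%N k_gt0.
- exact: leNye.
have kk_gt0 : 0 < k%:R * (k%:R - 1) :> R.
  by rewrite mulr_gt0 ?subr_gt0 ?ltr0n ?ltr1n.
have : m * (k%:R * (k%:R - 1) / 2) <= c.
  rewrite -triangular_sumr mulr_sumr (le_trans _ sum_le) // ler_sum // => i _.
  by rewrite mulrC ler_wpM2l // -lee_fin min_le.
rewrite lee_fin => le; rewrite mulrAC ler_pdivlMr //.
by move: (k%:R * _) le => P; lra.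
Qed.

Context {d phi e : nat -> R}.
Hypothesis d_le : forall m, d m.+1 <= phi m - phi m.+1.
Hypothesis phi_le : forall m, phi m.+1 <= e m - e m.+1.

Lemma weighted_descent_sum k :
  \sum_(i < k) i%:R * d i.+1 + k%:R * phi k <= e 0%N - e k.
Proof.
elim: k => [|k IH]; first by rewrite big_ord0 !mul0r !add0r subrr.
rewrite big_ord_recr /= -natr1.
have := ler_wpM2l (ler0n R k) (d_le k).
move: IH (phi_le k); lra.
Qed.

Lemma descent_bigmin_rate k : (forall m, 0 <= phi m) -> (forall m, 0 <= e m) ->
  (2 <= k)%N ->
  (\big[mine/+oo]_(1 <= i < k.+1) (d i)%:E <= (2 / (k%:R * (k%:R - 1)) * e 0%N)%:E)%E.
Proof.
move=> phi_ge0 e_ge0 k2; apply: bigmin_le_weighted_sum => //.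
have := mulr_ge0 (ler0n R k) (phi_ge0 k).
move: (weighted_descent_sum k) (e_ge0 k); lra.
Qed.

End DescentRate.

Theorem proposition4p6 (R : realType) (n : nat) (L : R) (C : set 'rV[R]_n)
  (f h : 'rV[R]_n -> \bar R) (lam : R) (x : nat -> 'rV[R]_n) :
  0 < L ->
  C !=set0 -> closed C -> convex_set_ C ->
  B_L L C f h ->
  0 < lam -> lam <= L^-1 ->
  interior (dom h) (x 0%N) ->
  (forall k : nat, is_minimizer (nolips_obj h lam (grad f (x k)) (x k)) (x k.+1)) ->
  forall xs : 'rV[R]_n,
    C xs -> dom h xs -> (forall y, C y -> (f xs <= f y)%E) ->
  forall k : nat, (2 <= k)%N ->
    (\big[mine/+oo%E]_(1 <= i < k.+1) Dh h (x i.-1) (x i)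
       <= (2 / (k%:R * (k%:R - 1)))%:E * Dh h xs (x 0%N))%E.
Proof.
move=> L0 _ _ _ [[_ [hcvx [hpr [clos [_ [[hdiff _] _]]]]]]].
move=> [[_ [fcvx fpr]] [domhf [[fdiff _] [argmin_uniq [_ [_ Lcvx]]]]]].
move=> lam0 lamL x0I xstep xs _ dxs xsmin k k2.
have xI := nolips_iterate_interior argmin_uniq lam0 x0I xstep.
have dx m : dom h (x m) := interior_subset (xI m).
have domC : dom h `<=` C by rewrite -clos; exact: subset_closure.
have lamL1 : lam * L <= 1 by rewrite -(ler_pM2r L0) mulVf ?gt_eqF in lamL.
have step m w :=
  nolips_minimizer_diff w lam0 hpr.1 (dx m) (hdiff _ (xI m.+1)) (xI m.+1) (xstep m).
have smad m := bregman_descent (hdiff _ (xI m)) (fdiff _ (xI m))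
  (fun t => Lcvx (x m) (x m.+1) t (domC _ (dx m)) (domC _ (dx m.+1)) (dx m) (dx m.+1)).
have breg_ge0 y m : dom h y -> 0 <= bregman (fine \o h) y (x m).
  by move=> dy; exact: bregman_ge0 hcvx hpr.1 (hdiff _ (xI m)) dy (dx m).
rewrite (eq_bigr _ (fun i _ => Dh_bregman hpr.1 (dx i.-1) (dx i))).
rewrite (Dh_bregman hpr.1 dxs (dx 0%N)) -EFinM.
apply: (@descent_bigmin_rate _ (fun i => bregman (fine \o h) (x i.-1) (x i))
  (fun m => lam * (fine (f (x m)) - fine (f xs)))
  (fun m => bregman (fine \o h) xs (x m))) => // m /=.
- rewrite -mulrBr opprB subrKA.
  exact: nolips_sufficient_decrease lam0 lamL1 (step m) (smad m) (breg_ge0 _ _ (dx m.+1)).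
- apply: (nolips_gap_decrease lam0 lamL1 (step m) (smad m) (breg_ge0 _ _ (dx m.+1))).
  exact: convex_efun_diff_le fcvx fpr.1 (fdiff _ (xI m)) (domhf _ (dx m)) (domhf _ dxs).
- rewrite mulr_ge0 ?(ltW lam0) // subr_ge0.
  have ffin y : dom h y -> f y \is a fin_num := fun dy => dom_fin_num fpr.1 (domhf _ dy).
  exact: fine_le (ffin _ dxs) (ffin _ (dx m)) (xsmin _ (domC _ (dx m))).
- exact: breg_ge0 _ _ dxs.
Qed.
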